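(* Let $T$ be a complete theory and $\varphi(x;y)$ a simple unstable formula of $T$ with characteristic sequence $\langle P_n:n<\omega\rangle$. If there do not exist (in a sufficiently saturated model of $T$) sets $X,Y\subseteq P_1$ forming an infinite empty pair for the edge relation $P_2$, then $\alpha(n)<\mathcal{O}(n^2)$, i.e. for every real $c_0>0$ we have $\alpha(n)<c_0n^2$ for all sufficiently large $n$.
   Context: The characteristic sequence of $\varphi(x;y)$ is given by $P_n(y_1,\dots,y_n):=\exists x\bigwedge_{i\le n}\varphi(x;y_i)$; as a standing assumption $T\vdash\forall y\exists z\forall x(\varphi(x;z)\leftrightarrow\neg\varphi(x;y))$. The $P_n$ are interpreted in a sufficiently saturated (monster) model of $T$. View $P_1$ as the vertex set of a graph with symmetric edge relation $P_2$ (loops not counted). For a finite $X\subseteq P_1$, $\hat e(X)$ is the number of unordered pairs of distinct $x,y\in X$ with $\neg P_2(x,y)$. Define $\alpha(n)=\max\{\hat e(X):X\subseteq P_1,|X|=n\}$. An infinite empty pair is a pair $(X,Y)$ with $|X|=|Y|\ge\aleph_0$ and $\neg P_2(x,y)$ for all $x\in X$, $y\in Y$. *)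

From Stdlib Require Import List Reals Classical ClassicalEpsilon Fin.
Import ListNotations.

Set Implicit Arguments.

Record signature := {
  fsym : Type;                      (* function symbols (constants = arity 0) *)
  farity : fsym -> nat;
  rsym : Type;
  rarity : rsym -> nat }.

Section Syntax.
Variable L : signature.

(* variables are de Bruijn indices *)
Inductive term : Type :=
  | tvar : nat -> term
  | tapp : forall f : fsym L, (Fin.t (farity L f) -> term) -> term.

Inductive formula : Type :=
  | feq  : term -> term -> formula
  | frel : forall r : rsym L, (Fin.t (rarity L r) -> term) -> formula
  | fneg : formula -> formula
  | fand : formula -> formula -> formula
  | fex  : formula -> formula.       (* binds variable 0 *)

Fixpoint tfree_below (n : nat) (t : term) : Prop :=
  match t with
  | tvar i => i < n
  | tapp f args => forall i, tfree_below n (args i)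
  end.

Fixpoint free_below (n : nat) (p : formula) : Prop :=
  match p with
  | feq t1 t2 => tfree_below n t1 /\ tfree_below n t2
  | frel r args => forall i, tfree_below n (args i)
  | fneg q => free_below n q
  | fand q1 q2 => free_below n q1 /\ free_below n q2
  | fex q => free_below (S n) q
  end.
End Syntax.

Record structure (L : signature) := {
  dom : Type;
  dom_pt : dom;
  fint : forall f : fsym L, (Fin.t (farity L f) -> dom) -> dom;
  rint : forall r : rsym L, (Fin.t (rarity L r) -> dom) -> Prop }.

Definition scons {A : Type} (a : A) (rho : nat -> A) : nat -> A :=
  fun i => match i with 0 => a | S j => rho j end.

Section Semantics.
Variables (L : signature) (M : structure L).

Fixpoint teval (rho : nat -> dom M) (t : term L) : dom M :=
  match t with
  | tvar _ i => rho i
  | tapp f args => fint M f (fun i => teval rho (args i))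
  end.

Fixpoint sat (rho : nat -> dom M) (p : formula L) : Prop :=
  match p with
  | feq t1 t2 => teval rho t1 = teval rho t2
  | frel r args => rint M r (fun i => teval rho (args i))
  | fneg q => ~ sat rho q
  | fand q1 q2 => sat rho q1 /\ sat rho q2
  | fex q => exists m, sat (scons m rho) q
  end.

(** M is aleph_1-saturated: every finitely satisfiable set of formulas in one
    free variable (variable 0) with parameters from a countable set
    A = {A 0, A 1, ...} is realized.  A pair (psi, s) stands for the
    L(A)-formula psi(x, A (s 0), A (s 1), ...), variable i+1 being sent to
    the parameter A (s i). *)
Definition aleph1_saturated : Prop :=
  forall (A : nat -> dom M) (p : formula L -> (nat -> nat) -> Prop),
    (forall l : list (formula L * (nat -> nat)),
        (forall q, In q l -> p (fst q) (snd q)) ->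
        exists b, forall q, In q l ->
          sat (scons b (fun i => A (snd q i))) (fst q)) ->
    exists b, forall psi s, p psi s -> sat (scons b (fun i => A (s i))) psi.

Variables (phi : formula L) (lx ly : nat).

(* phi(a;b), with a an lx-tuple (variables 0..lx-1) and b an ly-tuple
   (variables lx..lx+ly-1) *)
Definition phiH (a b : list (dom M)) : Prop :=
  sat (fun i => nth i (a ++ b) (dom_pt M)) phi.

Definition xtuple (a : list (dom M)) : Prop := length a = lx.
Definition ytuple (b : list (dom M)) : Prop := length b = ly.

Definition P1 (b : list (dom M)) : Prop := exists a, xtuple a /\ phiH a b.
Definition P2 (b1 b2 : list (dom M)) : Prop :=
  exists a, xtuple a /\ phiH a b1 /\ phiH a b2.

Definition negation_assumption : Prop :=
  forall b, ytuple b -> exists c, ytuple c /\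
    forall a, xtuple a -> (phiH a c <-> ~ phiH a b).

Definition unstable_formula : Prop :=
  exists (a : nat -> list (dom M)) (b : nat -> list (dom M)),
    (forall i, xtuple (a i)) /\ (forall j, ytuple (b j)) /\
    forall i j, phiH (a i) (b j) <-> i < j.

Definition k_tree_property (k : nat) : Prop :=
  exists tr : list nat -> list (dom M),
    (forall eta, ytuple (tr eta)) /\
    (forall sigma : nat -> nat, forall n, exists a, xtuple a /\
        forall m, m <= n -> phiH a (tr (map sigma (seq 0 m)))) /\
    (forall eta (l : list nat), NoDup l -> length l = k ->
        ~ exists a, xtuple a /\ forall i, In i l -> phiH a (tr (eta ++ [i]))).

Definition simple_formula : Prop := ~ exists k, k_tree_property k.

Definition vertex (b : list (dom M)) : Prop := ytuple b /\ P1 b.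

Definition decP (P : Prop) : bool :=
  if excluded_middle_informative P then true else false.

(* hat e(X): number of unordered pairs of distinct elements of X (given as a
   duplicate-free list) which are not P_2-connected *)
Fixpoint ehat (X : list (list (dom M))) : nat :=
  match X with
  | [] => 0
  | x :: X' => length (filter (fun y => decP (~ P2 x y)) X') + ehat X'
  end.

Definition vertex_set (X : list (list (dom M))) (n : nat) : Prop :=
  NoDup X /\ length X = n /\ forall x, In x X -> vertex x.

Definition is_alpha (n k : nat) : Prop :=
  (exists X, vertex_set X n /\ ehat X = k) /\
  (forall X, vertex_set X n -> ehat X <= k).

Definition infinite_empty_pair (X Y : list (dom M) -> Prop) : Prop :=
  (forall x, X x -> vertex x) /\ (forall y, Y y -> vertex y) /\
  (exists f : nat -> {x | X x}, forall i j, f i = f j -> i = j) /\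
  (exists (g : {x | X x} -> {y | Y y}) (h : {y | Y y} -> {x | X x}),
      (forall x, h (g x) = x) /\ (forall y, g (h y) = y)) /\
  (forall x y, X x -> Y y -> ~ P2 x y).

End Semantics.

(* If alpha(n) >= c n^2 for arbitrarily large n, the witnessing sets X of vertices carry at
   least |X|^2 / q non-edges of P_2 for a fixed q.  A Kovari-Sos-Turan argument (pass to the
   vertices of large non-degree, then greedily choose common non-neighbours) turns these into
   m x m complete bipartite patterns of non-edges, i.e. finite empty pairs of every size m.
   Being an empty pair of size m is first-order, so writing the pairs as a stream of elements and
   choosing one element at a time, each realizing the countable type "the prefix extends to empty
   pairs of every finite size" in the aleph_1-saturated model, yields an infinite empty pair. *)

From Stdlib Require Import List Arith Lia Classical ClassicalEpsilon FunctionalExtensionality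
  ProofIrrelevance Reals Lra.
Import ListNotations.

Lemma decP_spec (P : Prop) : decP P = true <-> P.
Proof.
  unfold decP; destruct (excluded_middle_informative P); split; auto; discriminate.
Qed.

Lemma list_sum_map_add {A : Type} (f g : A -> nat) (l : list A) :
  list_sum (map (fun x => f x + g x) l) = list_sum (map f l) + list_sum (map g l).
Proof. induction l as [|a l IH]; simpl; lia. Qed.

Lemma list_sum_map_le {A : Type} (f g : A -> nat) (l : list A) :
  (forall x, In x l -> f x <= g x) -> list_sum (map f l) <= list_sum (map g l).
Proof.
  induction l as [|a l IH]; simpl; intros H; auto.
  specialize (IH (fun x Hx => H x (or_intror Hx))). specialize (H a (or_introl eq_refl)). lia.
Qed.

Lemma list_sum_map_const {A : Type} (c : nat) (l : list A) :
  list_sum (map (fun _ => c) l) = length l * c.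
Proof. induction l as [|a l IH]; simpl; lia. Qed.

Lemma list_sum_map_scale {A : Type} (c : nat) (f : A -> nat) (l : list A) :
  list_sum (map (fun x => c * f x) l) = c * list_sum (map f l).
Proof. induction l as [|a l IH]; simpl; lia. Qed.

Lemma length_filter_list_sum {A : Type} (p : A -> bool) (l : list A) :
  length (filter p l) = list_sum (map (fun x => if p x then 1 else 0) l).
Proof. induction l as [|a l IH]; simpl; auto. destruct (p a); simpl; lia. Qed.

Lemma list_sum_map_filter_split {A : Type} (f : A -> nat) (p : A -> bool) (l : list A) :
  list_sum (map f l) =
  list_sum (map f (filter p l)) + list_sum (map f (filter (fun x => negb (p x)) l)).
Proof. induction l as [|a l IH]; simpl; auto. destruct (p a); simpl; lia. Qed.

Lemma list_sum_le_length_mul_max {A : Type} (f : A -> nat) (l : list A) :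
  l <> [] -> exists a, In a l /\ list_sum (map f l) <= length l * f a.
Proof.
  induction l as [|a [|b l] IH]; intros Hne; [congruence| exists a; simpl; split; auto; lia |].
  destruct IH as [u [Hu Hs]]; [discriminate|].
  destruct (le_lt_dec (f a) (f u)).
  - exists u. split; [right; auto|]. simpl in *. nia.
  - exists a. split; [left; auto|]. simpl in *. nia.
Qed.

Section CompleteBipartite.
Context {V : Type} (R : V -> V -> Prop).

Definition deg (U : list V) (v : V) : nat := length (filter (fun u => decP (R v u)) U).

Definition in_nbrs (F : list V) (u : V) : list V := filter (fun v => decP (R v u)) F.

Fixpoint count_pairs (X : list V) : nat :=
  match X with
  | [] => 0
  | x :: X' => deg X' x + count_pairs X'
  end.

Lemma list_sum_in_nbrs (F U : list V) :
  list_sum (map (fun u => length (in_nbrs F u)) U) = list_sum (map (deg U) F).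
Proof.
  induction F as [|v F IH]; simpl.
  - rewrite list_sum_map_const. lia.
  - rewrite <- IH. unfold deg at 1. rewrite length_filter_list_sum, <- list_sum_map_add.
    f_equal. apply map_ext. intro u. unfold in_nbrs. simpl. destruct (decP (R v u)); reflexivity.
Qed.

Lemma common_in_nbr (F U : list V) : U <> [] ->
  exists u, In u U /\ list_sum (map (deg U) F) <= length U * length (in_nbrs F u).
Proof. rewrite <- list_sum_in_nbrs. apply list_sum_le_length_mul_max. Qed.

Lemma deg_app_cons (U1 U2 : list V) (u v : V) :
  deg (U1 ++ u :: U2) v <= S (deg (U1 ++ U2) v).
Proof.
  unfold deg. rewrite !filter_app, !length_app. simpl. destruct (decP (R v u)); simpl; lia.
Qed.

(* Greedily pick the [u] in [U] with the most in-neighbours in [F] and keep only those: by double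
   counting at least a fraction [s / n >= r / n] of [F] survives each step. *)
Lemma complete_bipartite_greedy (n r j : nat) : forall (F U : list V) (s : nat),
  NoDup F -> NoDup U -> length U <= n -> j + r <= s -> s <= length U ->
  (forall v, In v F -> s <= deg U v) ->
  exists F' C, NoDup F' /\ incl F' F /\ NoDup C /\ incl C U /\ length C = j /\
    (forall v c, In v F' -> In c C -> R v c) /\
    length F * r ^ j <= length F' * n ^ j.
Proof.
  induction j as [|j IH]; intros F U s HF HU Hn Hjr Hs Hdeg.
  - exists F, []. repeat split; auto using incl_refl, NoDup_nil; try (intros ? []); simpl; lia.
  - assert (HUne : U <> []) by (intros ->; simpl in Hs; lia).
    destruct (common_in_nbr F U HUne) as [u [Hu Hbest]].
    assert (Hsum : length F * s <= list_sum (map (deg U) F)).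
    { rewrite <- list_sum_map_const. apply list_sum_map_le. auto. }
    destruct (in_split u U Hu) as [U1 [U2 ->]].
    destruct (IH (in_nbrs F u) (U1 ++ U2) (s - 1))
      as [F' [C [HF' [HF'F1 [HC [HCU [HCj [Hcompl Hbound]]]]]]]].
    + apply NoDup_filter; auto.
    + eapply NoDup_remove_1; eauto.
    + rewrite length_app in *. simpl in Hn. lia.
    + lia.
    + rewrite length_app in *. simpl in Hs. lia.
    + intros v Hv. apply filter_In in Hv as [Hv _].
      specialize (Hdeg v Hv). pose proof (deg_app_cons U1 U2 u v). lia.
    + exists F', (u :: C). repeat split.
      * exact HF'.
      * intros v Hv. apply (incl_filter (fun v => decP (R v u)) F), HF'F1, Hv.
      * constructor; auto. intro HuC. apply HCU in HuC. eapply NoDup_remove_2; eauto.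
      * intros c [<- | Hc]; [apply in_elt|]. apply HCU in Hc.
        apply in_app_or in Hc as [|]; apply in_or_app; simpl; auto.
      * simpl. lia.
      * intros v c Hv [<- | Hc]; [|auto].
        apply HF'F1, filter_In in Hv as [_ Hv]. apply decP_spec, Hv.
      * assert (length (U1 ++ u :: U2) * length (in_nbrs F u) <= n * length (in_nbrs F u))
          by (apply Nat.mul_le_mono_r; auto).
        assert (Hshrink : length F * s <= n * length (in_nbrs F u)) by lia.
        assert (length F * r * r ^ j <= length F * s * r ^ j) by (apply Nat.mul_le_mono_r; nia).
        assert (length F * s * r ^ j <= n * length (in_nbrs F u) * r ^ j)
          by (apply Nat.mul_le_mono_r; auto).
        simpl. nia.
Qed.

Lemma count_pairs_le_deg_sum (X : list V) :
  count_pairs X <= list_sum (map (deg X) X).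
Proof.
  enough (H : forall W, count_pairs X <= list_sum (map (deg (W ++ X)) X)) by apply (H []).
  induction X as [|x X IH]; intro W; simpl; auto.
  specialize (IH (W ++ [x])). rewrite <- app_assoc in IH. simpl in IH.
  assert (deg X x <= deg (W ++ x :: X) x).
  { unfold deg. rewrite filter_app, length_app. simpl. destruct (decP (R x x)); simpl; lia. }
  lia.
Qed.

(* Markov's inequality for the degrees. *)
Lemma many_high_degree (q : nat) (X : list V) :
  length X * length X <= q * count_pairs X ->
  length X <= 2 * q * length (filter (fun v => decP (length X <= 2 * q * deg X v)) X).
Proof.
  intros Hdense. set (n := length X) in *.
  set (high := fun v => decP (n <= 2 * q * deg X v)).
  pose proof (count_pairs_le_deg_sum X) as Hsum.
  rewrite (list_sum_map_filter_split _ high) in Hsum.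
  set (H := filter high X) in *. set (NH := filter (fun v => negb (high v)) X) in *.
  assert (Hhigh : list_sum (map (deg X) H) <= length H * n).
  { rewrite <- list_sum_map_const. apply list_sum_map_le. intros. apply filter_length_le. }
  assert (Hlow : 2 * q * list_sum (map (deg X) NH) <= length NH * n).
  { rewrite <- list_sum_map_scale, <- list_sum_map_const. apply list_sum_map_le.
    intros v Hv. apply filter_In in Hv as [_ Hv].
    destruct (high v) eqn:E; [discriminate|].
    assert (~ n <= 2 * q * deg X v)
      by (intro Hc; apply decP_spec in Hc; unfold high in E; congruence).
    lia. }
  assert (length NH <= n) by apply filter_length_le.
  nia.
Qed.

Lemma complete_bipartite_of_min_degree (n r m s : nat) (H X : list V) :
  NoDup H -> NoDup X -> incl H X -> length X <= n -> m + r <= s -> s <= length X ->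
  (forall v, In v H -> s <= deg X v) -> m * n ^ m < length H * r ^ m ->
  exists S C, length S = m /\ length C = m /\ NoDup S /\ NoDup C /\
    incl S X /\ incl C X /\ (forall v c, In v S -> In c C -> R v c).
Proof.
  intros HH HX HHX Hn Hmr Hs Hdeg Hlarge.
  destruct (complete_bipartite_greedy n r m H X s)
    as [F' [C [HF' [HF'H [HC [HCX [HCm [Hcompl Hbound]]]]]]]]; auto.
  assert (HmF' : m <= length F').
  { destruct (le_lt_dec m (length F')) as [|Hlt]; auto.
    assert (length F' * n ^ m <= m * n ^ m) by (apply Nat.mul_le_mono_r; lia). lia. }
  assert (Hfirst : incl (firstn m F') F')
    by (intros v Hv; rewrite <- (firstn_skipn m F'); apply in_or_app; left; exact Hv).
  exists (firstn m F'), C. split; [|split; [|split; [|split; [|split; [|split]]]]].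
  - apply firstn_length_le, HmF'.
  - exact HCm.
  - rewrite <- (firstn_skipn m F') in HF'. eapply NoDup_app_remove_r, HF'.
  - exact HC.
  - intros v Hv. apply HHX, HF'H, Hfirst, Hv.
  - exact HCX.
  - intros v c Hv Hc. apply Hcompl; [apply Hfirst, Hv | exact Hc].
Qed.

Lemma complete_bipartite_of_dense (q m : nat) : 0 < q ->
  exists N0, forall X, NoDup X -> N0 <= length X ->
    length X * length X <= q * count_pairs X ->
    exists S C, length S = m /\ length C = m /\ NoDup S /\ NoDup C /\
      incl S X /\ incl C X /\ (forall v c, In v S -> In c C -> R v c).
Proof.
  intros Hq. set (D := 4 * q). set (P := (2 * D) ^ m).
  exists (D * (m + 1) + 2 * q * P * m + 1).
  intros X HX HN Hdense. set (n := length X) in *.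
  set (r := n / D). set (s := n / (2 * q)).
  assert (Hr : D * r <= n < D * S r)
    by (split; [apply Nat.Div0.mul_div_le | apply Nat.mul_succ_div_gt; lia]).
  assert (Hs : 2 * q * s <= n) by apply Nat.Div0.mul_div_le.
  assert (Hmr : m < r).
  { destruct (le_lt_dec r m) as [Hle|]; auto.
    assert (D * S r <= D * (m + 1)) by (apply Nat.mul_le_mono_l; lia). lia. }
  assert (Hrs : 2 * r <= s) by (apply Nat.div_le_lower_bound; unfold D in Hr; lia).
  set (H := filter (fun v => decP (n <= 2 * q * deg X v)) X).
  pose proof (many_high_degree q X Hdense) as HH. fold n H in HH.
  apply (complete_bipartite_of_min_degree n r m s H X); auto; try lia.
  - apply NoDup_filter, HX.
  - apply incl_filter.
  - apply (Nat.le_trans _ (2 * q * s)); [nia | exact Hs].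
  - intros v Hv. apply filter_In in Hv as [_ Hv]. rewrite decP_spec in Hv.
    destruct (le_lt_dec s (deg X v)) as [|Hlt]; auto.
    assert (Hle : 2 * q * S (deg X v) <= 2 * q * s) by (apply Nat.mul_le_mono_l; lia).
    rewrite Nat.mul_succ_r in Hle. lia.
  - assert (Hn : n <= 2 * D * r).
    { assert (D * 1 <= D * r) by (apply Nat.mul_le_mono_l; lia).
      rewrite Nat.mul_succ_r in Hr. lia. }
    assert (Hpow : n ^ m <= P * r ^ m)
      by (unfold P; rewrite <- Nat.pow_mul_l; apply Nat.pow_le_mono_l, Hn).
    assert (Hrpos : 0 < r ^ m) by (apply Nat.neq_0_lt_0, Nat.pow_nonzero; lia).
    assert (HPH : m * P < length H).
    { destruct (le_lt_dec (length H) (m * P)) as [Hle|]; auto.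
      assert (2 * q * length H <= 2 * q * (m * P)) by (apply Nat.mul_le_mono_l, Hle). lia. }
    apply (Nat.le_lt_trans _ (m * P * r ^ m)).
    + rewrite <- Nat.mul_assoc. apply Nat.mul_le_mono_l, Hpow.
    + apply Nat.mul_lt_mono_pos_r; assumption.
Qed.
End CompleteBipartite.

Section Definability.
Context {L : signature} (M : structure L).

Fixpoint rename_term (s : nat -> nat) (t : term L) : term L :=
  match t with
  | tvar _ i => tvar L (s i)
  | tapp f args => tapp f (fun i => rename_term s (args i))
  end.

Definition up_ren (s : nat -> nat) : nat -> nat :=
  fun i => match i with 0 => 0 | S j => S (s j) end.

Fixpoint rename (s : nat -> nat) (p : formula L) : formula L :=
  match p with
  | feq t1 t2 => feq (rename_term s t1) (rename_term s t2)
  | frel r args => frel r (fun i => rename_term s (args i))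
  | fneg q => fneg (rename s q)
  | fand q1 q2 => fand (rename s q1) (rename s q2)
  | fex q => fex (rename (up_ren s) q)
  end.

Lemma teval_rename (s : nat -> nat) (rho : nat -> dom M) (t : term L) :
  teval M rho (rename_term s t) = teval M (fun i => rho (s i)) t.
Proof.
  induction t as [i | f args IH]; simpl; auto.
  f_equal. apply functional_extensionality. intro i. apply IH.
Qed.

Lemma sat_rename (p : formula L) : forall (s : nat -> nat) (rho : nat -> dom M),
  sat M rho (rename s p) <-> sat M (fun i => rho (s i)) p.
Proof.
  induction p as [t1 t2 | r args | q IH | q1 IH1 q2 IH2 | q IH]; intros s rho; simpl.
  - rewrite !teval_rename. reflexivity.
  - erewrite (functional_extensionality _ (fun i => teval M _ (args i)));
      [reflexivity | intro i; apply teval_rename].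
  - rewrite IH. reflexivity.
  - rewrite IH1, IH2. reflexivity.
  - assert (Hup : forall a, (fun i => scons a rho (up_ren s i)) = scons a (fun i => rho (s i)))
      by (intro a; apply functional_extensionality; intros [|i]; reflexivity).
    split; intros [a Ha]; exists a.
    + rewrite <- Hup. apply IH, Ha.
    + apply IH. rewrite Hup. exact Ha.
Qed.

Lemma teval_agree (t : term L) : forall (n : nat) (rho rho' : nat -> dom M),
  tfree_below n t -> (forall i, i < n -> rho i = rho' i) -> teval M rho t = teval M rho' t.
Proof.
  induction t as [i | f args IH]; intros n rho rho' Hfree Hagree; simpl in *; auto.
  f_equal. apply functional_extensionality. intro i. eapply IH; eauto.
Qed.

Lemma sat_agree (p : formula L) : forall (n : nat) (rho rho' : nat -> dom M),
  free_below n p -> (forall i, i < n -> rho i = rho' i) -> (sat M rho p <-> sat M rho' p).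
Proof.
  induction p as [t1 t2 | r args | q IH | q1 IH1 q2 IH2 | q IH];
    intros n rho rho' Hfree Hagree; simpl in *.
  - destruct Hfree. erewrite (teval_agree t1), (teval_agree t2); eauto. reflexivity.
  - erewrite (functional_extensionality _ (fun i => teval M rho' (args i)));
      [reflexivity | intro i; eapply teval_agree; eauto].
  - rewrite (IH n rho rho'); auto. reflexivity.
  - destruct Hfree. rewrite (IH1 n rho rho'), (IH2 n rho rho'); auto. reflexivity.
  - assert (Hup : forall a, forall i, i < S n -> scons a rho i = scons a rho' i)
      by (intros a [|i] Hi; simpl; auto; apply Hagree; lia).
    split; intros [a Ha]; exists a.
    + apply (IH (S n) (scons a rho)); auto.
    + apply (IH (S n) (scons a rho) (scons a rho')); auto.
Qed.

Definition definable (R : (nat -> dom M) -> Prop) : Prop :=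
  exists psi : formula L, forall rho, R rho <-> sat M rho psi.

Lemma definable_iff (R R' : (nat -> dom M) -> Prop) :
  definable R -> (forall rho, R rho <-> R' rho) -> definable R'.
Proof. intros [psi H] H'. exists psi. intro rho. rewrite <- H'. apply H. Qed.

Lemma definable_and (R1 R2 : (nat -> dom M) -> Prop) :
  definable R1 -> definable R2 -> definable (fun rho => R1 rho /\ R2 rho).
Proof.
  intros [p1 H1] [p2 H2]. exists (fand p1 p2). intro rho. simpl. rewrite H1, H2. reflexivity.
Qed.

Lemma definable_not (R : (nat -> dom M) -> Prop) :
  definable R -> definable (fun rho => ~ R rho).
Proof. intros [p H]. exists (fneg p). intro rho. simpl. rewrite H. reflexivity. Qed.

Lemma definable_eq (i j : nat) : definable (fun rho => rho i = rho j).
Proof. exists (feq (tvar L i) (tvar L j)). reflexivity. Qed.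

Lemma definable_rename (R : (nat -> dom M) -> Prop) (s : nat -> nat) :
  definable R -> definable (fun rho => R (fun i => rho (s i))).
Proof. intros [p H]. exists (rename s p). intro rho. rewrite sat_rename. apply H. Qed.

Lemma definable_ex (R : (nat -> dom M) -> Prop) :
  definable R -> definable (fun rho => exists a, R (scons a rho)).
Proof.
  intros [p H]. exists (fex p). intro rho. simpl.
  split; intros [a Ha]; exists a; apply H, Ha.
Qed.

Lemma definable_forall_lt (K : nat) (R : nat -> (nat -> dom M) -> Prop) :
  (forall i, definable (R i)) -> definable (fun rho => forall i, i < K -> R i rho).
Proof.
  intros HR. induction K as [|K IH].
  - exists (feq (tvar L 0) (tvar L 0)). intro rho. simpl. split; auto. intros _ i Hi. lia.
  - eapply definable_iff; [apply (definable_and _ _ IH (HR K))|].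
    intro rho. split.
    + intros [HK HK'] i Hi. destruct (Nat.eq_dec i K) as [->|]; auto. apply HK. lia.
    + intros H. split; auto.
Qed.

Definition prepend (l : list (dom M)) (rho : nat -> dom M) : nat -> dom M :=
  fun i => if i <? length l then nth i l (dom_pt M) else rho (i - length l).

Lemma prepend_snoc (l : list (dom M)) (a : dom M) (rho : nat -> dom M) :
  prepend (l ++ [a]) rho = prepend l (scons a rho).
Proof.
  apply functional_extensionality. intro i. unfold prepend. rewrite length_app. simpl.
  destruct (Nat.ltb_spec i (length l)); destruct (Nat.ltb_spec i (length l + 1)); try lia.
  - apply app_nth1. exact H.
  - rewrite app_nth2 by lia. replace (i - length l) with 0 by lia. reflexivity.
  - replace (i - length l) with (S (i - (length l + 1))) by lia. reflexivity.
Qed.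

Lemma prepend_nil (rho : nat -> dom M) : prepend [] rho = rho.
Proof.
  apply functional_extensionality. intro i. unfold prepend. simpl. f_equal. lia.
Qed.

Lemma definable_ex_list (k : nat) : forall R : (nat -> dom M) -> Prop,
  definable R -> definable (fun rho => exists l, length l = k /\ R (prepend l rho)).
Proof.
  induction k as [|k IH]; intros R HR.
  - eapply definable_iff; [exact HR|]. intro rho. split.
    + intro H. exists []. rewrite prepend_nil. auto.
    + intros [[|a l] [Hl H]]; [rewrite prepend_nil in H; exact H | discriminate].
  - eapply definable_iff; [apply definable_ex, (IH _ HR)|]. intro rho. split.
    + intros [a [l [Hl H]]]. exists (l ++ [a]). rewrite length_app, prepend_snoc, Hl.
      simpl. split; [lia | exact H].
    + intros [l [Hl H]].
      destruct (exists_last (l := l)) as [l' [a ->]]; [intros ->; discriminate|].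
      rewrite length_app in Hl. simpl in Hl. rewrite prepend_snoc in H.
      exists a, l'. split; [lia | exact H].
Qed.

End Definability.

Lemma list_bounded_index {A : Type} (P : A -> nat -> Prop) (l : list A) :
  (forall x, In x l -> exists m, P x m) ->
  exists K, forall x, In x l -> exists m, m <= K /\ P x m.
Proof.
  induction l as [|a l IH]; intros Hl; [exists 0; intros x []|].
  destruct IH as [K HK]; [intros x Hx; apply Hl; right; exact Hx|].
  destruct (Hl a (or_introl eq_refl)) as [ma Hma].
  exists (Nat.max K ma). intros x [<- | Hx].
  - exists ma. split; [lia | exact Hma].
  - destruct (HK x Hx) as [m [Hm HPm]]. exists m. split; [lia | exact HPm].
Qed.

(* The conditions [R m (x, A)] form a finitely satisfiable type over the countable set [A]. *)
Lemma realize_decreasing_chain {L : signature} (M : structure L) (A : nat -> dom M)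
    (R : nat -> (nat -> dom M) -> Prop) :
  aleph1_saturated M -> (forall m, definable M (R m)) ->
  (forall m rho, R (S m) rho -> R m rho) ->
  (forall m, exists b, R m (scons b A)) -> exists b, forall m, R m (scons b A).
Proof.
  intros Hsat Hdef Hmono Hfin.
  set (psi := fun m => proj1_sig (constructive_indefinite_description _ (Hdef m))).
  assert (Hpsi : forall m rho, R m rho <-> sat M rho (psi m))
    by (intro m; exact (proj2_sig (constructive_indefinite_description _ (Hdef m)))).
  assert (Hmono' : forall m K rho, m <= K -> R K rho -> R m rho)
    by (intros m K rho Hle; induction Hle; auto).
  destruct (Hsat A (fun p s => s = (fun i => i) /\ exists m, p = psi m)) as [b Hb].
  - intros l Hl.
    destruct (list_bounded_index (fun q m => fst q = psi m /\ snd q = (fun i => i)) l)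
      as [K HK]; [intros q Hq; destruct (Hl q Hq) as [Hs [m Hm]]; exists m; auto|].
    destruct (Hfin K) as [b Hb]. exists b.
    intros q Hq. destruct (HK q Hq) as [m [Hm [-> ->]]].
    apply Hpsi. eapply Hmono'; eauto.
  - exists b. intro m. apply Hpsi, (Hb (psi m) (fun i => i)). eauto.
Qed.

Lemma stream_of_prefixes {A : Type} (a0 : A) (P : list A -> Prop) :
  P [] -> (forall E, P E -> exists b, P (E ++ [b])) ->
  exists e : nat -> A, forall n, P (map e (seq 0 n)).
Proof.
  intros Hnil Hstep.
  set (next := fun E => E ++ [epsilon (inhabits a0) (fun b => P (E ++ [b]))]).
  set (st := fun n => Nat.iter n next []).
  assert (Hst : forall n, P (st n)).
  { induction n as [|n IH]; [exact Hnil|].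
    apply (epsilon_spec (inhabits a0) (fun b => P (st n ++ [b]))), Hstep, IH. }
  exists (fun i => last (st (S i)) a0). intro n.
  enough (Hpre : st n = map (fun i => last (st (S i)) a0) (seq 0 n))
    by (rewrite <- Hpre; apply Hst).
  induction n as [|n IH]; [reflexivity|].
  rewrite seq_S, map_app, <- IH. simpl.
  change (st (S n)) with (next (st n)). unfold next. rewrite last_last. reflexivity.
Qed.

Lemma range_bijection {B : Type} (u v : nat -> B) :
  (forall i j, u i = u j -> i = j) -> (forall i j, v i = v j -> i = j) ->
  exists (g : {x | exists i, x = u i} -> {y | exists i, y = v i})
         (h : {y | exists i, y = v i} -> {x | exists i, x = u i}),
    (forall x, h (g x) = x) /\ (forall y, g (h y) = y).
Proof.
  intros Hu Hv.
  assert (Hidx : forall w : nat -> B,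
    exists idx : {x | exists i, x = w i} -> nat, forall x, proj1_sig x = w (idx x)).
  { intro w. exists (fun x => proj1_sig (constructive_indefinite_description
                                 (fun i => proj1_sig x = w i) (proj2_sig x))).
    intro x. exact (proj2_sig (constructive_indefinite_description _ (proj2_sig x))). }
  destruct (Hidx u) as [iu Hiu], (Hidx v) as [iv Hiv].
  exists (fun x => exist _ (v (iu x)) (ex_intro _ (iu x) eq_refl)),
         (fun y => exist _ (u (iv y)) (ex_intro _ (iv y) eq_refl)).
  split; [intro x | intro y]; apply eq_sig_hprop; try (intros; apply proof_irrelevance); simpl.
  - rewrite Hiu. f_equal. apply Hv. rewrite <- Hiv. reflexivity.
  - rewrite Hiv. f_equal. apply Hu. rewrite <- Hiu. reflexivity.
Qed.

Section EmptyPairs.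
Context {L : signature} (M : structure L) (phi : formula L) (lx ly : nat).
Hypothesis Hfree : free_below (lx + ly) phi.

Definition segment (rho : nat -> dom M) (p k : nat) : list (dom M) := map rho (seq p k).

Lemma length_segment (rho : nat -> dom M) (p k : nat) : length (segment rho p k) = k.
Proof. unfold segment. rewrite length_map, length_seq. reflexivity. Qed.

Lemma nth_segment (rho : nat -> dom M) (p k i : nat) (d : dom M) :
  i < k -> nth i (segment rho p k) d = rho (p + i).
Proof.
  intros Hi. unfold segment.
  rewrite nth_indep with (d' := rho 0) by (rewrite length_map, length_seq; exact Hi).
  rewrite map_nth, seq_nth by exact Hi. reflexivity.
Qed.

Lemma segment_ext (rho rho' : nat -> dom M) (p k : nat) :
  (forall c, c < k -> rho (p + c) = rho' (p + c)) -> segment rho p k = segment rho' p k.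
Proof.
  intros H. apply (nth_ext _ _ (dom_pt M) (dom_pt M)); rewrite !length_segment; [reflexivity|].
  intros c Hc. rewrite !nth_segment; auto.
Qed.

Lemma segment_eq_iff (rho : nat -> dom M) (p q k : nat) :
  segment rho p k = segment rho q k <-> forall c, c < k -> rho (p + c) = rho (q + c).
Proof.
  split.
  - intros H c Hc. rewrite <- (nth_segment rho p k c (dom_pt M)), H by exact Hc.
    apply nth_segment, Hc.
  - intros H. apply (nth_ext _ _ (dom_pt M) (dom_pt M)); rewrite !length_segment; [reflexivity|].
    intros c Hc. rewrite !nth_segment; auto.
Qed.

Lemma segment_prepend (a : list (dom M)) (rho : nat -> dom M) :
  segment (prepend M a rho) 0 (length a) = a.
Proof.
  apply (nth_ext _ _ (dom_pt M) (dom_pt M)); rewrite ?length_segment; [reflexivity|].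
  intros c Hc. rewrite nth_segment by exact Hc. unfold prepend.
  destruct (Nat.ltb_spec (0 + c) (length a)); [reflexivity | lia].
Qed.

Lemma segment_prepend_shift (a : list (dom M)) (rho : nat -> dom M) (q k : nat) :
  segment (prepend M a rho) (length a + q) k = segment rho q k.
Proof.
  apply (nth_ext _ _ (dom_pt M) (dom_pt M)); rewrite ?length_segment; [reflexivity|].
  intros c Hc. rewrite !nth_segment by exact Hc. unfold prepend.
  destruct (Nat.ltb_spec (length a + q + c) (length a)); [lia|]. f_equal. lia.
Qed.

Lemma definable_phiH (p q : nat) :
  definable M (fun rho => phiH M phi (segment rho p lx) (segment rho q ly)).
Proof.
  eapply definable_iff;
    [apply (definable_rename M (fun rho => sat M rho phi)
              (fun c => if c <? lx then p + c else q + (c - lx)));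
     exists phi; reflexivity|].
  intro rho. unfold phiH. apply (sat_agree M _ _ _ _ Hfree). intros i Hi.
  destruct (Nat.ltb_spec i lx).
  - rewrite app_nth1 by (rewrite length_segment; exact H). symmetry. apply nth_segment, H.
  - rewrite app_nth2 by (rewrite length_segment; exact H). rewrite length_segment.
    symmetry. apply nth_segment. lia.
Qed.

Lemma definable_P1 (q : nat) : definable M (fun rho => P1 M phi lx (segment rho q ly)).
Proof.
  eapply definable_iff; [apply (definable_ex_list M lx), (definable_phiH 0 (lx + q))|].
  intro rho. unfold P1, xtuple.
  split; intros [a [Hl H]]; exists a; split; auto; revert H; rewrite <- Hl;
    rewrite segment_prepend, segment_prepend_shift; auto.
Qed.

Lemma definable_P2 (q1 q2 : nat) :
  definable M (fun rho => P2 M phi lx (segment rho q1 ly) (segment rho q2 ly)).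
Proof.
  eapply definable_iff;
    [apply (definable_ex_list M lx), definable_and;
     [apply (definable_phiH 0 (lx + q1)) | apply (definable_phiH 0 (lx + q2))]|].
  intro rho. unfold P2, xtuple.
  split; intros [a [Hl H]]; exists a; split; auto; revert H; rewrite <- Hl;
    rewrite segment_prepend, !segment_prepend_shift; auto.
Qed.

Lemma definable_vertex (q : nat) : definable M (fun rho => vertex M phi lx ly (segment rho q ly)).
Proof.
  eapply definable_iff; [apply (definable_P1 q)|]. intro rho.
  unfold vertex, ytuple. rewrite length_segment. split; [intros H; split | intros [_ H]]; auto.
Qed.

Lemma definable_segment_neq (p q : nat) :
  definable M (fun rho => segment rho p ly <> segment rho q ly).
Proof.
  eapply definable_iff;
    [apply definable_not, (definable_forall_lt M ly (fun c rho => rho (p + c) = rho (q + c)));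
     intro c; apply definable_eq|].
  intro rho. rewrite segment_eq_iff. reflexivity.
Qed.

Definition block (rho : nat -> dom M) (b : nat) : list (dom M) := segment rho (b * ly) ly.

(* The blocks [x_i := block f (2 i)] and [y_i := block f (2 i + 1)], [i < m], of [f] form an
   empty pair of size [m]. *)
Definition config (m : nat) (f : nat -> dom M) : Prop :=
  (forall b, b < 2 * m -> vertex M phi lx ly (block f b)) /\
  (forall i, i < m -> forall j, j < i ->
     block f (2 * i) <> block f (2 * j) /\ block f (2 * i + 1) <> block f (2 * j + 1)) /\
  (forall i, i < m -> forall j, j < m -> ~ P2 M phi lx (block f (2 * i)) (block f (2 * j + 1))).

Lemma config_agree (m : nat) (f g : nat -> dom M) :
  (forall i, i < 2 * m * ly -> f i = g i) -> config m f -> config m g.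
Proof.
  intros Hfg [Hvert [Hdist Hempty]].
  assert (Hblock : forall b, b < 2 * m -> block f b = block g b)
    by (intros b Hb; apply segment_ext; intros c Hc; apply Hfg; nia).
  split; [|split].
  - intros b Hb. rewrite <- Hblock by exact Hb. auto.
  - intros i Hi j Hj. rewrite <- !Hblock by lia. auto.
  - intros i Hi j Hj. rewrite <- !Hblock by lia. auto.
Qed.

Lemma config_pred (m : nat) (f : nat -> dom M) : config (S m) f -> config m f.
Proof.
  intros [Hvert [Hdist Hempty]].
  split; [|split]; intros; [apply Hvert | apply Hdist | apply Hempty]; lia.
Qed.

Lemma definable_config (m : nat) : definable M (config m).
Proof.
  repeat apply definable_and; repeat (apply definable_forall_lt; intro).
  - apply definable_vertex.
  - apply definable_and; apply definable_segment_neq.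
  - apply definable_not, definable_P2.
Qed.

Definition extends (m : nat) (E : list (dom M)) : Prop :=
  exists f, (forall i, i < length E -> f i = nth i E (dom_pt M)) /\ config m f.

Definition extendable (E : list (dom M)) : Prop := forall m, extends m E.

(* [rho 1, ..., rho k] is the prefix and [rho 0] the next entry; the other entries among the
   first [2 m ly] are quantified over. *)
Lemma definable_extension (k m : nat) : definable M (fun rho =>
  exists f, (forall i, i < k -> f i = rho (S i)) /\ f k = rho 0 /\ config m f).
Proof.
  set (n := 2 * m * ly).
  set (tau := fun i => if i <? k then n + S i else if i =? k then n else i - S k).
  eapply definable_iff;
    [apply (definable_ex_list M n), (definable_rename M (config m) tau), definable_config|].
  intro rho. split.
  - intros [ext [Hext Hconf]]. exists (fun i => prepend M ext rho (tau i)).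
    split; [|split]; [|unfold tau, prepend | exact Hconf].
    + intros i Hi. unfold tau, prepend. rewrite Hext.
      destruct (Nat.ltb_spec i k); [|lia]. destruct (Nat.ltb_spec (n + S i) n); [lia|].
      f_equal. lia.
    + rewrite Nat.ltb_irrefl, Nat.eqb_refl, Hext, Nat.ltb_irrefl, Nat.sub_diag. reflexivity.
  - intros [f [Hpre [Hlast Hconf]]]. exists (segment f (S k) n).
    split; [apply length_segment|]. apply (config_agree m f); auto.
    intros i Hi. unfold tau, prepend. rewrite length_segment.
    destruct (Nat.ltb_spec i k); [|destruct (Nat.eqb_spec i k) as [->|]].
    + destruct (Nat.ltb_spec (n + S i) n); [lia|]. rewrite Hpre by exact H. f_equal. lia.
    + rewrite Nat.ltb_irrefl, Nat.sub_diag. exact Hlast.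
    + destruct (Nat.ltb_spec (i - S k) n); [|lia]. rewrite nth_segment by exact H0. f_equal. lia.
Qed.

Lemma extendable_snoc (E : list (dom M)) : aleph1_saturated M ->
  extendable E -> exists b, extendable (E ++ [b]).
Proof.
  intros Hsat HE.
  destruct (realize_decreasing_chain M (fun i => nth i E (dom_pt M)) (fun m rho =>
      exists f, (forall i, i < length E -> f i = rho (S i)) /\ f (length E) = rho 0 /\ config m f))
    as [b Hb]; auto using definable_extension.
  - intros m rho [f [Hpre [Hlast Hconf]]]. exists f. auto using config_pred.
  - intro m. destruct (HE m) as [f [Hpre Hconf]]. exists (f (length E)), f. auto.
  - exists b. intro m. destruct (Hb m) as [f [Hpre [Hlast Hconf]]]. exists f. split; [|exact Hconf].
    intros i Hi. rewrite length_app in Hi. simpl in Hi.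
    destruct (Nat.ltb_spec i (length E)).
    + rewrite app_nth1 by exact H. apply Hpre, H.
    + replace i with (length E) by lia. rewrite app_nth2, Nat.sub_diag by lia. exact Hlast.
Qed.

Lemma config_of_stream (e : nat -> dom M) :
  (forall n, extendable (segment e 0 n)) -> forall m, config m e.
Proof.
  intros He m. destruct (He (2 * m * ly) m) as [f [Hpre Hconf]].
  apply (config_agree m f); auto. intros i Hi.
  rewrite Hpre by (rewrite length_segment; exact Hi). apply nth_segment, Hi.
Qed.

Lemma infinite_empty_pair_of_configs (e : nat -> dom M) :
  (forall m, config m e) -> exists X Y, infinite_empty_pair M phi lx ly X Y.
Proof.
  intros He.
  set (x := fun i => block e (2 * i)). set (y := fun i => block e (2 * i + 1)).
  assert (Hpair : forall i j, vertex M phi lx ly (x i) /\ vertex M phi lx ly (y i) /\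
      (j < i -> x i <> x j /\ y i <> y j) /\ ~ P2 M phi lx (x i) (y j)).
  { intros i j. destruct (He (S (i + j))) as [Hvert [Hdist Hempty]].
    split; [|split; [|split]];
      [apply Hvert | apply Hvert | intro; apply Hdist | apply Hempty]; lia. }
  assert (Hinj : (forall i j, x i = x j -> i = j) /\ (forall i j, y i = y j -> i = j)).
  { assert (Hdist : forall i j, j < i -> x i <> x j /\ y i <> y j)
      by (intros i j; exact (proj1 (proj2 (proj2 (Hpair i j))))).
    split; intros i j Heq; destruct (lt_eq_lt_dec i j) as [[Hlt|]|Hlt]; auto; exfalso;
      destruct (Hdist _ _ Hlt); auto. }
  destruct Hinj as [Hx Hy].
  exists (fun a => exists i, a = x i), (fun b => exists i, b = y i).
  split; [|split; [|split; [|split]]].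
  - intros a [i ->]. apply (Hpair i 0).
  - intros b [i ->]. apply (Hpair i 0).
  - exists (fun i => exist _ (x i) (ex_intro _ i eq_refl)).
    intros i j Heq. apply Hx. exact (f_equal (@proj1_sig _ _) Heq).
  - apply range_bijection; assumption.
  - intros a b [i ->] [j ->]. apply (Hpair i j).
Qed.

Definition finite_empty_pair (m : nat) (xs ys : list (list (dom M))) : Prop :=
  length xs = m /\ length ys = m /\ NoDup xs /\ NoDup ys /\
  (forall x, In x xs -> vertex M phi lx ly x) /\ (forall y, In y ys -> vertex M phi lx ly y) /\
  (forall x y, In x xs -> In y ys -> ~ P2 M phi lx x y).

Lemma block_of_blocks (T : nat -> list (dom M)) (b : nat) : 0 < ly -> length (T b) = ly ->
  block (fun p => nth (p mod ly) (T (p / ly)) (dom_pt M)) b = T b.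
Proof.
  intros Hly HT. unfold block.
  apply (nth_ext _ _ (dom_pt M) (dom_pt M)); rewrite length_segment; [auto|].
  intros c Hc. rewrite nth_segment by exact Hc.
  replace ((b * ly + c) / ly) with b by (apply (Nat.div_unique _ _ _ c); lia).
  replace ((b * ly + c) mod ly) with c by (apply (Nat.mod_unique _ _ b); lia).
  reflexivity.
Qed.

Lemma config_of_finite_empty_pair (m : nat) (xs ys : list (list (dom M))) : 0 < ly ->
  finite_empty_pair m xs ys -> exists f, config m f.
Proof.
  intros Hly [Hxs [Hys [Hndx [Hndy [Hvx [Hvy Hempty]]]]]].
  set (T := fun b => nth (Nat.div2 b) (if Nat.even b then xs else ys) []).
  assert (Heven : forall i, T (2 * i) = nth i xs [])
    by (intro i; unfold T; rewrite Nat.even_even, Nat.div2_even; reflexivity).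
  assert (Hodd : forall i, T (2 * i + 1) = nth i ys [])
    by (intro i; unfold T; rewrite Nat.even_odd, Nat.div2_odd'; reflexivity).
  assert (HTv : forall b, b < 2 * m -> vertex M phi lx ly (T b)).
  { intros b Hb. destruct (Nat.Even_or_Odd b) as [[i ->]|[i ->]].
    - rewrite Heven. apply Hvx, nth_In. lia.
    - rewrite Hodd. apply Hvy, nth_In. lia. }
  set (f := fun p => nth (p mod ly) (T (p / ly)) (dom_pt M)).
  assert (Hblock : forall b, b < 2 * m -> block f b = T b)
    by (intros b Hb; apply block_of_blocks; [exact Hly | apply (HTv b Hb)]).
  exists f. split; [|split].
  - intros b Hb. rewrite Hblock; auto.
  - intros i Hi j Hj. rewrite !Hblock, Heven, Heven, Hodd, Hodd by lia.
    split; intro Heq; [apply (NoDup_nth xs []) in Heq | apply (NoDup_nth ys []) in Heq]; auto; lia.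
  - intros i Hi j Hj. rewrite !Hblock, Heven, Hodd by lia. apply Hempty; apply nth_In; lia.
Qed.

Lemma infinite_empty_pair_of_finite : aleph1_saturated M -> 0 < ly ->
  (forall m, exists xs ys, finite_empty_pair m xs ys) ->
  exists X Y, infinite_empty_pair M phi lx ly X Y.
Proof.
  intros Hsat Hly Hfin.
  assert (Hnil : extendable []).
  { intro m. destruct (Hfin m) as [xs [ys Hpair]].
    destruct (config_of_finite_empty_pair m xs ys Hly Hpair) as [f Hf].
    exists f. split; [intros i Hi; simpl in Hi; lia | exact Hf]. }
  destruct (stream_of_prefixes (dom_pt M) extendable Hnil (fun E => extendable_snoc E Hsat))
    as [e He].
  apply (infinite_empty_pair_of_configs e), config_of_stream, He.
Qed.

End EmptyPairs.

Lemma ehat_count_pairs {L : signature} (M : structure L) (phi : formula L) (lx : nat)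
    (X : list (list (dom M))) :
  ehat M phi lx X = count_pairs (fun x y => ~ P2 M phi lx x y) X.
Proof. induction X as [|x X IH]; simpl; auto. Qed.

Section Density.
Context {L : signature} (M : structure L) (phi : formula L) (lx ly : nat).

Lemma ly_pos_of_unstable : unstable_formula M phi lx ly -> 0 < ly.
Proof.
  intros [a [b [_ [Hb Hab]]]].
  destruct ly as [|ly']; [exfalso|lia].
  assert (Hb01 : b 0 = b 1).
  { pose proof (Hb 0) as H0. pose proof (Hb 1) as H1. unfold ytuple in *.
    destruct (b 0), (b 1); [reflexivity | discriminate ..]. }
  apply (Nat.lt_irrefl 0), Hab. rewrite Hb01. apply Hab. lia.
Qed.

Definition dense_vertex_sets (q : nat) : Prop :=
  forall N, exists X, N <= length X /\ NoDup X /\ (forall x, In x X -> vertex M phi lx ly x) /\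
    length X * length X <= q * ehat M phi lx X.

Lemma dense_of_unbounded_alpha (c0 : R) : (0 < c0)%R ->
  ~ (exists N, forall n k, N <= n -> is_alpha M phi lx ly n k -> (INR k < c0 * INR n ^ 2)%R) ->
  exists q, 0 < q /\ dense_vertex_sets q.
Proof.
  intros Hc0 Hunbounded. destruct (archimed_cor1 c0 Hc0) as [q [Hqc0 Hq]].
  exists q. split; [exact Hq|]. intro N.
  destruct (not_all_ex_not _ _ (fun H => Hunbounded (ex_intro _ N H))) as [n Hn].
  destruct (not_all_ex_not _ _ Hn) as [k Hk].
  apply imply_to_and in Hk as [HNn Hk].
  apply imply_to_and in Hk as [[[X [[HX [Hlen Hvert]] HXk]] _] Hk].
  exists X. rewrite Hlen, HXk. split; [|split; [|split]]; [exact HNn | exact HX | exact Hvert |].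
  apply INR_le. rewrite !mult_INR.
  assert (HqR : (0 < INR q)%R) by (apply lt_0_INR, Hq).
  assert (Hqc0' : (1 < INR q * c0)%R).
  { apply (Rmult_lt_compat_l (INR q)) in Hqc0; [|exact HqR]. rewrite Rinv_r in Hqc0; lra. }
  pose proof (pos_INR n). simpl in Hk. nra.
Qed.

Lemma finite_empty_pairs_of_dense (q : nat) : 0 < q -> dense_vertex_sets q ->
  forall m, exists xs ys, finite_empty_pair M phi lx ly m xs ys.
Proof.
  intros Hq Hdense m.
  destruct (complete_bipartite_of_dense (fun x y => ~ P2 M phi lx x y) q m Hq) as [N0 HN0].
  destruct (Hdense N0) as [X [HN [HX [Hvert HXdense]]]].
  rewrite ehat_count_pairs in HXdense.
  destruct (HN0 X HX HN HXdense) as [xs [ys [Hxs [Hys [Hndx [Hndy [HxsX [HysX Hempty]]]]]]]].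
  exists xs, ys. repeat (split; [assumption|]).
  split; [|split];
    [intros x Hx; apply Hvert, HxsX, Hx | intros y Hy; apply Hvert, HysX, Hy | exact Hempty].
Qed.

End Density.

Open Scope R_scope.

Theorem mainTheorem2 (L : signature) (M : structure L) (phi : formula L)
    (lx ly : nat)
    (Hsat : aleph1_saturated M)
    (Hfree : free_below (lx + ly) phi)
    (Hneg : negation_assumption M phi lx ly)
    (Hsimple : simple_formula M phi lx ly)
    (Hunstable : unstable_formula M phi lx ly)
    (Hnoempty : ~ exists X Y, infinite_empty_pair M phi lx ly X Y) :
  forall c0 : R, 0 < c0 ->
    exists N : nat, forall n k : nat, (N <= n)%nat ->
      is_alpha M phi lx ly n k -> INR k < c0 * (INR n) ^ 2.
Proof.
  intros c0 Hc0. apply NNPP. intro Hunbounded. apply Hnoempty.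
  destruct (dense_of_unbounded_alpha M phi lx ly c0 Hc0 Hunbounded) as [q [Hq Hdense]].
  apply (infinite_empty_pair_of_finite M phi lx ly Hfree Hsat).
  - exact (ly_pos_of_unstable M phi lx ly Hunstable).
  - exact (finite_empty_pairs_of_dense M phi lx ly q Hq Hdense).
Qed.
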